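(* Let $\tau>0$, $a\ge2$, let $s,d$ be integers with $1\le s\le d$ and $d=4k$ for an integer $k$. Let $\hat\sigma_*^2=\frac2d\sum_{1\le k\le d/2}Y^2_{(k)}$. Then $$\sup_{P_\xi\in\mathcal G_{a,\tau}}\sup_{\sigma>0}\sup_{\theta\in\Theta_s}\frac{\mathbf E_{\theta,P_\xi,\sigma}(\hat\sigma_*^2-\sigma^2)^2}{\sigma^4}\ge\frac1{64}.$$
   Context: Model: $Y_i=\theta_i+\sigma\xi_i$, $i=1,\dots,d$, $\theta\in\mathbb R^d$, $\sigma>0$, $\xi_i$ i.i.d. with distribution $P_\xi$; $\mathbf E_{\theta,P_\xi,\sigma}$ expectation; $\Theta_s=\{\theta:\|\theta\|_0\le s\}$. $\mathcal G_{a,\tau}$: distributions with $\mathbf E\xi_1=0,\mathbf E\xi_1^2=1$, $\mathbf P(|\xi_1|>t)\le2e^{-(t/\tau)^a}$ for all $t\ge2$. $Y^2_{(1)}\le\dots\le Y^2_{(d)}$ are the ordered values of $Y_1^2,\dots,Y_d^2$. *)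

From HB Require Import structures.
From mathcomp Require Import all_boot all_order all_algebra.
From mathcomp Require Import all_classical all_reals all_analysis.
Set Implicit Arguments. Unset Strict Implicit. Unset Printing Implicit Defensive.
Import Order.TTheory GRing.Theory Num.Theory.
Import numFieldNormedType.Exports.
Local Open Scope classical_set_scope.
Local Open Scope ring_scope.

Definition G_class {R : realType} (a tau : R) (mu : probability R R) : Prop :=
  mu.-integrable setT (fun x => x%:E) /\
  (\int[mu]_x x%:E = 0)%E /\
  (\int[mu]_x (x ^+ 2)%:E = 1)%E /\
  (forall t : R, 2 <= t ->
     (mu [set x : R | (t < `|x|)%R] <= (2 * expR (- ((t / tau) `^ a)))%:E)%E).

Definition iid_with_law {R : realType} {dO : measure_display} {Omega : measurableType dO}
  (n : nat) (P : probability Omega R) (xi : 'I_n -> Omega -> R)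
  (mu : probability R R) : Prop :=
  (forall i, measurable_fun setT (xi i)) /\
  (forall B : 'I_n -> set R, (forall i, measurable (B i)) ->
     P (\bigcap_(i in [set: 'I_n]) (xi i @^-1` B i)) = (\prod_(i < n) mu (B i))%E).

Definition Theta_s {R : realType} (d s : nat) (theta : 'I_d -> R) : Prop :=
  (#|[set i | theta i != 0%R]| <= s)%N.

Definition sum_smallest {R : realType} (d m : nat) (z : 'I_d -> R) : R :=
  \sum_(j < m) nth 0 (sort <=%R [seq z i | i <- enum 'I_d]) j.

Definition sigma_star_hat {R : realType} (d : nat) (Y : 'I_d -> R) : R :=
  (2 / d%:R) * sum_smallest (d %/ 2) (fun i => Y i ^+ 2).

Definition normalized_risk {R : realType} {dO : measure_display} {Omega : measurableType dO}
  (d : nat) (P : probability Omega R) (xi : 'I_d -> Omega -> R)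
  (sigma : R) (theta : 'I_d -> R) : \bar R :=
  ((\int[P]_w ((sigma_star_hat (fun i => theta i + sigma * xi i w) - sigma ^+ 2) ^+ 2)%:E)
    * ((sigma ^+ 4)^-1)%:E)%E.

(* Take theta = 0, sigma = 1 and the noise xi = 2 with probability 1/5,
   xi = -1/2 with probability 4/5: it is centred, has unit variance and is
   bounded by 2, so it lies in every class G_{a,tau}.  Then Y_i^2 is 4 or 1/4.
   Whenever at most d/2 of the xi_i equal 2, the d/2 smallest Y_i^2 are all
   1/4, so the estimator returns 1/4 and its squared error is 9/16.  The
   number of i with xi_i = 2 has mean d/5, so by Markov's inequality this
   happens with probability at least 3/5, and the normalized risk is at least
   9/16 * 3/5 = 27/80 >= 1/64. *)

From HB Require Import structures.
From mathcomp Require Import all_boot all_order all_algebra.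
From mathcomp Require Import all_classical all_reals all_analysis.
From mathcomp Require Import ring lra zify measurable_realfun.
Set Implicit Arguments. Unset Strict Implicit. Unset Printing Implicit Defensive.
Import Order.TTheory GRing.Theory Num.Theory.
Local Open Scope classical_set_scope.
Local Open Scope ring_scope.

Section order_statistics.
Variable R : realType.

Lemma sorted_nth_min (al : R) (s : seq R) (j : nat) :
  sorted <=%R s -> all [pred x | al <= x] s -> (j < count (pred1 al) s)%N ->
  nth 0 s j = al.
Proof.
elim: s j => [//|x s IH] j /= xs /andP[alx als].
have [-> | xal] := eqVneq x al.
  case: j => [//|j] /=; rewrite add1n ltnS; apply: IH => //.
  exact: path_sorted xs.
have {}alx : al < x by rewrite lt_neqAle eq_sym xal.
suff -> : count (pred1 al) s = 0%N by [].
apply/count_memPn/negP => als'; move: xs; rewrite (path_sortedE le_trans).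
by case/andP=> /allP/(_ al als'); rewrite leNgt alx.
Qed.

Lemma sum_smallest_min (d m : nat) (z : 'I_d -> R) (al : R) :
  (forall i, al <= z i) -> (m <= #|[pred i | z i == al]|)%N ->
  sum_smallest m z = m%:R * al.
Proof.
move=> zal mal; rewrite /sum_smallest.
set s := sort _ _.
have sz : perm_eq s [seq z i | i <- enum 'I_d] by rewrite perm_sort.
have cs : count (pred1 al) s = #|[pred i | z i == al]|.
  rewrite (permP sz) count_map -sum1_count big_enum_cond sum1_card.
  by apply: eq_card.
rewrite mulr_natl -[in RHS](card_ord m) -sumr_const; apply: eq_bigr => j _.
apply: sorted_nth_min; first exact: sort_le_sorted.
  by rewrite (perm_all _ sz); apply/allP => _ /mapP[i _ ->]; exact: zal.
by rewrite cs (leq_trans (ltn_ord j)).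
Qed.

Lemma sigma_star_hat_min (d : nat) (Y : 'I_d -> R) (al : R) :
  (0 < d)%N -> ~~ odd d -> (forall i, al <= Y i ^+ 2) ->
  (d %/ 2 <= #|[pred i | Y i ^+ 2 == al]|)%N -> sigma_star_hat Y = al.
Proof.
move=> d0 evd Yal half; rewrite /sigma_star_hat (sum_smallest_min Yal half).
rewrite natf_div ?dvdn2 //; field.
by rewrite pnatr_eq0 -lt0n.
Qed.

End order_statistics.

Section two_point_law.
Variables (R : realType) (p x y : R).
Hypothesis p01 : 0 <= p <= 1.

Definition two_point (b : bool) : R := if b then x else y.

Lemma measurable_two_point : measurable_fun [set: bool] two_point.
Proof. by []. Qed.

HB.instance Definition _ := isMeasurableFun.Build _ _ _ _ two_point measurable_two_point.

Definition two_point_law := distribution (bernoulli_prob p) two_point.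

Lemma two_point_lawE B :
  two_point_law B = (p * (x \in B)%:R + (1 - p) * (y \in B)%:R)%:E.
Proof.
rewrite /two_point_law /distribution /pushforward; apply: (etrans (bernoulli_probE p01 _)).
by rewrite !diracE -!EFinM -EFinD.
Qed.

Lemma integral_two_point_law (f : R -> \bar R) :
  measurable_fun [set: R] f -> (forall z, 0 <= f z)%E ->
  (\int[two_point_law]_z f z = p%:E * f x + (1 - p)%:E * f y)%E.
Proof.
move=> mf f0; rewrite ge0_integral_distribution //.
by rewrite (integral_bernoulli_prob p01) => [//|b]; exact: f0.
Qed.

Lemma two_point_law_G_class (a tau : R) :
  p * x + (1 - p) * y = 0 -> p * x ^+ 2 + (1 - p) * y ^+ 2 = 1 ->
  `|x| <= 2 -> `|y| <= 2 -> G_class a tau two_point_law.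
Proof.
move=> mean0 var1 x2 y2.
have mid : measurable_fun [set: R] (fun z : R => z%:E).
  by apply/measurable_EFinP; exact: measurable_id.
have mnorm : measurable_fun [set: R] (fun z : R => (`|z|)%:E).
  by apply/measurable_EFinP; exact: normr_measurable.
split; [|split; [|split]].
- apply/integrableP; split => //.
  by rewrite (integral_two_point_law (f := fun z => `|z|%:E)) // -!EFinM -EFinD ltry.
- rewrite integralE !integral_two_point_law //;
    [|exact: measurable_funeneg|exact: measurable_funepos].
  rewrite !funeposE !funenegE -!EFinN -!EFin_max -!EFinM -!EFinD.
  have posBneg (r : R) : Num.max r 0 - Num.max (- r) 0 = r.
    exact: (congr1 (fun f => f r) (funrposBneg (@id R))).
  congr EFin; rewrite -[RHS]mean0 -[in RHS](posBneg x) -[in RHS](posBneg y).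
  by ring.
- rewrite integral_two_point_law //; last by move=> z; rewrite lee_fin sqr_ge0.
    by rewrite -!EFinM -EFinD var1.
  by apply/measurable_EFinP; apply: measurable_funX; exact: measurable_id.
- move=> t t2.
  change (two_point_law [set z : R | (t < `|z|)%R] <= (2 * expR (- ((t / tau) `^ a)))%:E)%E.
  rewrite two_point_lawE !memNset /=; last 2 first.
  + by apply/negP; rewrite -leNgt (le_trans y2).
  + by apply/negP; rewrite -leNgt (le_trans x2).
  by rewrite !mulr0 addr0 lee_fin mulr_ge0 // expR_ge0.
Qed.

End two_point_law.

Definition cube (d : nat) : Type := {ffun 'I_d -> bool}.
HB.instance Definition _ d := Finite.on (cube d).
HB.instance Definition _ d := isPointed.Build (cube d) [ffun=> false].
HB.instance Definition _ d := @isMeasurable.Build default_measure_display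
  (cube d) discrete_measurable discrete_measurable0
  discrete_measurableC discrete_measurableU.

Lemma sum_cube_prod (R : comPzSemiRingType) (d : nat) (f : 'I_d -> bool -> R) :
  \sum_(w : cube d) \prod_i f i (w i) = \prod_i (f i true + f i false).
Proof.
rewrite (eq_bigr (fun i => \sum_(b : bool) f i b)); last by move=> i _; rewrite big_bool.
by rewrite bigA_distr_bigA.
Qed.

Lemma big_enum_nth (T : finType) (x0 : T) (V : Type) (idx : V)
    (op : Monoid.com_law idx) (F : T -> V) :
  \big[op/idx]_(n < #|T|) F (nth x0 (enum T) n) = \big[op/idx]_(w : T) F w.
Proof.
rewrite cardE -(big_mkord xpredT (fun n => F (nth x0 (enum T) n))).
by rewrite -(big_nth x0 xpredT F) big_enum.
Qed.

Section cube_probability.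
Variables (R : realType) (d : nat) (p : R).
Hypothesis p01 : 0 <= p <= 1.

Definition cube_weight (w : cube d) : R := \prod_i bernoulli_pmf p (w i).

Lemma cube_weight_ge0 w : 0 <= cube_weight w.
Proof. by apply: prodr_ge0 => i _; exact: bernoulli_pmf_ge0. Qed.

Lemma sum_cube_weight : \sum_w cube_weight w = 1.
Proof.
rewrite (sum_cube_prod (fun _ => bernoulli_pmf p)) big1 // => i _.
by rewrite /bernoulli_pmf addrC subrK.
Qed.

Definition cube_point (n : nat) : cube d := nth point (enum {: cube d}) n.

Definition cube_prob := msum (fun n => mscale (NngNum (cube_weight_ge0 (cube_point n)))
  (\d_(cube_point n) : {measure set (cube d) -> \bar R})) #|{: cube d}|.

Lemma cube_probE A : cube_prob A = (\sum_w cube_weight w * (w \in A)%:R)%:E.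
Proof.
rewrite /cube_prob /msum /= /mscale /= -sumEFin.
rewrite -(big_enum_nth (point : cube d)).
by apply: eq_bigr => n _; rewrite diracE.
Qed.

Lemma cube_prob_setT : cube_prob setT = 1%E.
Proof.
rewrite cube_probE -[in RHS]sum_cube_weight; congr EFin.
by apply: eq_bigr => w _; rewrite in_setT mulr1.
Qed.

HB.instance Definition _ := Measure.on cube_prob.
HB.instance Definition _ := Measure_isProbability.Build _ _ _ cube_prob cube_prob_setT.

Lemma integral_cube_prob (f : cube d -> \bar R) : (forall w, 0 <= f w)%E ->
  (\int[cube_prob]_w f w = \sum_w (cube_weight w)%:E * f w)%E.
Proof.
move=> f0; rewrite ge0_integral_measure_sum // -(big_enum_nth (point : cube d)).
apply: eq_bigr => n _; rewrite ge0_integral_mscale //.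
by rewrite integral_dirac // diracT mul1e.
Qed.

Lemma expected_coordinate (i : 'I_d) : \sum_w cube_weight w * (w i)%:R = p.
Proof.
pose f l b := bernoulli_pmf p b * (if l == i then b%:R else 1).
transitivity (\sum_(w : cube d) \prod_l f l (w l)).
  by apply: eq_bigr => w _; rewrite /f big_split /= -big_mkcond big_pred1_eq.
rewrite sum_cube_prod (bigD1 i) //= big1 => [|l /negbTE il].
  by rewrite /f eqxx /bernoulli_pmf mulr1 mulr0 addr0 mulr1.
by rewrite /f il !mulr1 /bernoulli_pmf addrC subrK.
Qed.

Lemma expected_card_true :
  \sum_w cube_weight w * #|[pred i | w i]|%:R = d%:R * p.
Proof.
under eq_bigr => w _ do rewrite -sum1_card big_mkcond natr_sum mulr_sumr.
rewrite exchange_big mulr_natl -[in RHS](card_ord d) -sumr_const.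
apply: eq_bigr => i _; rewrite -(expected_coordinate i).
by apply: eq_bigr => w _; rewrite inE; case: (w i).
Qed.

End cube_probability.


Section coordinates.
Variables (R : realType) (d : nat) (p x y : R).
Hypothesis p01 : 0 <= p <= 1.

Definition coordinate (i : 'I_d) (w : cube d) : R := two_point x y (w i).

Lemma coordinate_iid : iid_with_law (cube_prob p01) coordinate (two_point_law p x y).
Proof.
split => // B mB; apply: (etrans (cube_probE _ _)).
pose f i b := bernoulli_pmf p b * (two_point x y b \in B i)%:R.
rewrite (eq_bigr (fun i => (f i true + f i false)%:E)); last first.
  by move=> i _; exact: (two_point_lawE x y p01).
rewrite prodEFin; congr EFin.
rewrite -sum_cube_prod.
apply: eq_bigr => w _; rewrite big_split /=; congr (_ * _).
have [allB | /existsNP[i notBi]] := pselect (forall i, coordinate i w \in B i).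
  rewrite big1 => [|i _]; last by rewrite allB.
  by rewrite mem_set // => i _; exact/set_mem/allB.
rewrite (bigD1 i) //= (negbTE (introN idP notBi)) mul0r memNset // => wB.
by apply: notBi; apply/mem_set; exact: wB.
Qed.

End coordinates.

Section two_point_noise.
Variables (R : realType) (k : nat).

Let p01 : 0 <= (1/5 : R) <= 1. Proof. by apply/andP; split; lra. Qed.

Definition noise_law : probability R R := two_point_law (1/5) 2 (- (1/2)).
Definition noise_prob := @cube_prob R (4 * k) _ p01.
Definition noise := @coordinate R (4 * k) 2 (- (1/2)).

Lemma noise_law_G_class (a tau : R) : G_class a tau noise_law.
Proof. by apply: two_point_law_G_class; rewrite ?normrN ?ger0_norm //; lra. Qed.

Lemma noise_iid : iid_with_law noise_prob noise noise_law.
Proof. exact: coordinate_iid. Qed.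

Hypothesis k0 : (0 < k)%N.

(* Markov's inequality in pointwise form: the right side equals [9/16] as soon
   as at most half of the coordinates of [w] are [true]. *)
Lemma noise_squared_error_ge (w : cube (4 * k)) :
  9/16 * (1 - #|[pred i | w i]|%:R / (2 * k%:R)) <=
  (sigma_star_hat (fun i => 0 + 1 * noise i w) - 1 ^+ 2) ^+ 2.
Proof.
have k0R : (0 : R) < k%:R by rewrite ltr0n.
have [few | many] := leqP #|[pred i | w i]| (2 * k); last first.
  apply: le_trans (sqr_ge0 _); rewrite pmulr_rle0 // subr_le0.
  by rewrite ler_pdivlMr ?mulr_gt0 // mul1r -natrM ler_nat ltnW.
have quarter i : ((0 + 1 * noise i w) ^+ 2 == 1/4) = ~~ w i.
  rewrite /noise /coordinate /two_point add0r mul1r expr2.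
  by case: (w i) => /=; [apply/negbTE/eqP | apply/eqP]; lra.
rewrite (@sigma_star_hat_min _ _ _ (1/4)).
- have : 0 <= #|[pred i | w i]|%:R / (2 * k%:R) :> R.
    by apply: divr_ge0; rewrite // mulr_ge0 // ltW.
  rewrite expr1n expr2; lra.
- by rewrite muln_gt0.
- by rewrite oddM.
- move=> i; rewrite /noise /coordinate /two_point add0r mul1r.
  by case: (w i); lra.
- rewrite (eq_card quarter) -[X in (_ <= X)%N](addKn #|[pred i | w i]|).
  rewrite cardC card_ord; lia.
Qed.

Lemma noise_risk_ge :
  ((27/80 : R)%:E <= normalized_risk noise_prob noise 1 (fun _ => 0%R))%E.
Proof.
rewrite /normalized_risk [1 ^+ 4]expr1n invr1 mule1 integral_cube_prob => [|w]; last first.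
  by rewrite lee_fin sqr_ge0.
under eq_bigr do rewrite -EFinM.
rewrite sumEFin lee_fin.
apply: le_trans (ler_sum _ (fun w _ =>
  ler_wpM2l (cube_weight_ge0 p01 w) (noise_squared_error_ge w))).
have k0R : (k%:R : R) != 0 by rewrite pnatr_eq0 -lt0n.
rewrite (eq_bigr (fun w => 9/16 * cube_weight (1/5) w -
    9 / (32 * k%:R) * (cube_weight (1/5) w * #|[pred i | w i]|%:R))); last first.
  by move=> w _; field.
rewrite big_split /= sumrN -!mulr_sumr sum_cube_weight expected_card_true natrM.
suff -> : 9 / 16 * 1 - 9 / (32 * k%:R) * (4%:R * k%:R * (1 / 5)) = 27 / 80 :> R by [].
by field.
Qed.

End two_point_noise.

Theorem proposition8 (R : realType) (tau a : R) (s d k : nat) :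
  0 < tau -> 2 <= a -> (1 <= s)%N -> (s <= d)%N -> d = (4 * k)%N ->
  (ereal_sup [set r : \bar R | exists (dO : measure_display) (Omega : measurableType dO)
      (P : probability Omega R) (xi : 'I_d -> Omega -> R) (mu : probability R R)
      (sigma : R) (theta : 'I_d -> R),
      [/\ G_class a tau mu, iid_with_law P xi mu, (0 < sigma)%R, Theta_s s theta &
          r = normalized_risk P xi sigma theta]]
   >= (1 / 64)%:E)%E.
Proof.
move=> _ _ s1 sd dk; subst d.
have k0 : (0 < k)%N by lia.
apply: le_ereal_sup_tmp; exists (normalized_risk (@noise_prob R k) (@noise R k) 1 (fun _ => 0)).
  exists _, _, (@noise_prob R k), (@noise R k), (noise_law R), 1, (fun _ => 0); split => //.
  - exact: noise_law_G_class.
  - exact: noise_iid.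
  - by rewrite /Theta_s eq_card0 // => i; apply/negbTE; rewrite notin_setE /= eqxx.
by apply: le_trans (noise_risk_ge R k0); rewrite lee_fin; lra.
Qed.
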